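(* Let $e_1,\dots,e_n$ be positive real numbers and let $J_n=\{(x_1,\dots,x_n)\in\mathbb{R}^n: 0\le x_1\le\cdots\le x_n\le1\}$. Then $$\int_{J_n}\det\bigl[x_j^{e_i-1}\bigr]_{1\le i,j\le n}\,dx_1\cdots dx_n=\frac1{e_1\cdots e_n}\prod_{1\le i<j\le n}\frac{e_j-e_i}{e_j+e_i}.$$ *)

From HB Require Import structures.
From mathcomp Require Import all_boot all_order all_algebra.
From mathcomp Require Import all_classical all_reals all_analysis.
Set Implicit Arguments. Unset Strict Implicit. Unset Printing Implicit Defensive.
Import Order.TTheory GRing.Theory Num.Theory.
Local Open Scope ring_scope.
Local Open Scope ereal_scope.

Fixpoint iint (R : realType) (n : nat) : (n.-tuple R -> \bar R) -> \bar R :=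
  match n with
  | 0 => fun f => f [tuple]
  | k.+1 => fun f =>
      \int[@lebesgue_measure R]_x iint (fun t : k.-tuple R => f [tuple of x :: t])
  end.

Definition Jn (R : realType) (n : nat) : set (n.-tuple R) :=
  [set x | (forall i : 'I_n, (0 <= tnth x i)%R /\ (tnth x i <= 1)%R) /\
           (forall i j : 'I_n, (i <= j)%N -> (tnth x i <= tnth x j)%R)].

Definition powdet (R : realType) (n : nat) (e : 'I_n -> R) (x : n.-tuple R) : R :=
  \det (\matrix_(i < n, j < n) (tnth x j `^ (e i - 1))%R).

From HB Require Import structures.
From mathcomp Require Import all_boot all_order all_algebra.
From mathcomp Require Import all_classical all_reals all_analysis.
From mathcomp Require Import measurable_realfun.
From mathcomp Require Import ring lra.
Set Implicit Arguments. Unset Strict Implicit. Unset Printing Implicit Defensive.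
Import Order.TTheory GRing.Theory Num.Theory.
Import numFieldNormedType.Exports.
Local Open Scope ring_scope.

(* Expanding the determinant along its last column writes it as a signed sum of
   monomials x_1^(a_1-1) ... x_n^(a_n-1), and such a monomial integrates over J_n
   to 1 / (a_1 (a_1 + a_2) ... (a_1 + ... + a_n)).  Hence the integral I(e)
   satisfies I(e) = (e_1 + ... + e_n)^-1 * sum_i (-1)^(i+n) I(e without e_i).
   The right-hand side obeys the same recursion: expand along its last row the
   Vandermonde determinant whose row (e_j^(n-1))_j is replaced by the values at
   the e_j of prod_a (X + e_a) - prod_a (X - e_a), a polynomial of degree n-1 with
   leading coefficient 2 (e_1 + ... + e_n) and value prod_a (e_i + e_a) at e_i.
   As x_1 is integrated outermost, the inner integrals over
   c <= x_k <= ... <= x_n <= 1 are carried along as explicit finite sums of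
   real powers of c. *)

Lemma ltn_lift n (i : 'I_n.+1) (a b : 'I_n) : (lift i a < lift i b)%N = (a < b)%N.
Proof. by rewrite /= !ltnNge leq_bump2. Qed.

Section ProdLift.
Variable R : comPzSemiRingType.

Lemma prod_ord_lift_cond n (i : 'I_n.+1) (P : pred 'I_n.+1) (g : 'I_n.+1 -> R) :
  \prod_(b < n.+1 | P b) g b =
  (if P i then g i else 1) * \prod_(b < n | P (lift i b)) g (lift i b).
Proof. by rewrite big_mkcond (bigD1_ord i) //= [in RHS]big_mkcond. Qed.

Lemma prod_pairs_lift n (i : 'I_n.+1) (f : 'I_n.+1 -> 'I_n.+1 -> R) :
  \prod_(a < n.+1) \prod_(b < n.+1 | (a < b)%N) f a b =
  (\prod_(a < n) \prod_(b < n | (a < b)%N) f (lift i a) (lift i b)) *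
  \prod_(a < n) (if (lift i a < i)%N then f (lift i a) i else f i (lift i a)).
Proof.
rewrite (bigD1_ord i) //= (prod_ord_lift_cond i) ltnn mul1r.
under [X in _ * X]eq_bigr => a _ do
  rewrite (prod_ord_lift_cond i (fun b => (lift i a < b)%N)).
under [X in _ * X]eq_bigr => a _ do under eq_bigl => b do rewrite ltn_lift.
rewrite big_split /= mulrA mulrC; congr (_ * _).
rewrite [X in X * _]big_mkcond -big_split /=; apply: eq_bigr => a _.
have := neq_lift i a; rewrite neq_ltn; case: ltnP => /= [ai _|ia ->].
  by rewrite ltnNge ltnW // mulr1.
by rewrite mul1r.
Qed.

End ProdLift.

Section VandermondeExpansion.
Variable R : comNzRingType.

Definition vdm_prod n (e : 'I_n -> R) :=
  \prod_(i < n) \prod_(j < n | (i < j)%N) (e j - e i).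

Lemma vdm_prodE n (e : 'I_n -> R) : vdm_prod e = \det (Vandermonde n (\row_j e j)).
Proof.
by rewrite det_Vandermonde; apply: eq_bigr => i _; apply: eq_bigr => j _; rewrite !mxE.
Qed.

(* The matrix with last row [r.[e_j]] is [T *m Vandermonde], where [T] is
   triangular with last diagonal entry [r`_n]. *)
Lemma vdm_prod_expand n (e : 'I_n.+1 -> R) (r : {poly R}) : (size r <= n.+1)%N ->
  \sum_(i < n.+1) (-1) ^+ (n + i) * r.[e i] * vdm_prod (fun k => e (lift i k)) =
  r`_n * vdm_prod e.
Proof.
move=> size_r.
pose M := \matrix_(k < n.+1, j < n.+1) (if k == ord_max then r.[e j] else e j ^+ k).
pose T := \matrix_(k < n.+1, l < n.+1) (if k == ord_max then r`_l else (k == l)%:R).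
have M_T : M = T *m Vandermonde n.+1 (\row_j e j).
  apply/matrixP => k j; rewrite !mxE; under eq_bigr do rewrite !mxE.
  case: ifP => [_|k_max]; first by rewrite (horner_coef_wide _ size_r).
  rewrite (bigD1 k) //= eqxx mul1r big1 ?addr0 // => l /negPf l_k.
  by rewrite eq_sym l_k mul0r.
have detT : \det T = r`_n.
  rewrite det_trig; last first.
    apply/is_trig_mxP => k l lt_kl; rewrite mxE.
    have -> : (k == ord_max) = false.
      by apply/negbTE/eqP => k_max; move: lt_kl; rewrite k_max ltnNge -ltnS ltn_ord.
    by case: eqP lt_kl => // ->; rewrite ltnn.
  rewrite (bigD1 ord_max) //= big1 ?mulr1; first by rewrite mxE eqxx.
  by move=> k /negPf k_max; rewrite mxE k_max eqxx.
have := congr1 determinant M_T; rewrite det_mulmx detT -vdm_prodE => <-.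
rewrite (expand_det_row _ ord_max); apply: eq_bigr => i _.
rewrite !mxE eqxx /cofactor mulrCA -mulrA; congr (_ * (_ * _)).
rewrite vdm_prodE; congr (\det _); apply/matrixP => k l; rewrite !mxE.
by rewrite lift_eqF lift_max.
Qed.

Definition plus_minus_poly n (e : 'I_n -> R) : {poly R} :=
  \prod_(a < n) ('X - (- e a)%:P) - \prod_(a < n) ('X - (e a)%:P).

Lemma prod_XsubC_ord n (c : 'I_n -> R) :
  \prod_(a < n) ('X - (c a)%:P) = \prod_(x <- map c (enum 'I_n)) ('X - x%:P).
Proof. by rewrite big_map big_enum. Qed.

Lemma size_plus_minus_poly n (e : 'I_n.+1 -> R) :
  (size (plus_minus_poly e) <= n.+1)%N.
Proof.
apply/leq_sizeP => j; rewrite leq_eqVlt coefB !prod_XsubC_ord.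
case/orP => [/eqP <-|lt_nj]; last first.
  by rewrite !nth_default ?subrr // size_prod_XsubC size_map size_enum_ord.
have lead1 (c : 'I_n.+1 -> R) :
    (\prod_(x <- map c (enum 'I_n.+1)) ('X - x%:P))`_n.+1 = 1.
  have := monicP (monic_prod_XsubC (map c (enum 'I_n.+1)) predT id).
  by rewrite /lead_coef size_prod_XsubC size_map size_enum_ord.
by rewrite lead1 lead1 subrr.
Qed.

Lemma coef_plus_minus_poly n (e : 'I_n.+1 -> R) :
  (plus_minus_poly e)`_n = 2 * \sum_a e a.
Proof.
rewrite coefB !prod_XsubC_ord.
have := coefPn_prod_XsubC (ps := map (fun a => - e a) (enum 'I_n.+1)).
have := coefPn_prod_XsubC (ps := map e (enum 'I_n.+1)).
rewrite !size_map -enumT size_enum_ord /= => -> // -> //.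
by rewrite !big_map -enumT !big_enum /= sumrN opprK mulr2n mulrDl mul1r.
Qed.

Lemma horner_plus_minus_poly n (e : 'I_n -> R) i :
  (plus_minus_poly e).[e i] = \prod_(a < n) (e i + e a).
Proof.
rewrite hornerD hornerN !horner_prod [X in _ - X](bigD1 i) //=.
rewrite hornerXsubC subrr mul0r subr0.
by apply: eq_bigr => a _; rewrite hornerXsubC opprK.
Qed.

End VandermondeExpansion.

Section DetIntegralValue.
Variable R : realFieldType.

Definition pair_sum_prod n (e : 'I_n -> R) :=
  \prod_(i < n) \prod_(j < n | (i < j)%N) (e j + e i).

Definition det_integral_value n (e : 'I_n -> R) :=
  (\prod_(i < n) e i)^-1 *
  \prod_(i < n) \prod_(j < n | (i < j)%N) ((e j - e i) / (e j + e i)).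

Lemma det_integral_valueE n (e : 'I_n -> R) :
  det_integral_value e = vdm_prod e / ((\prod_i e i) * pair_sum_prod e).
Proof.
rewrite /det_integral_value /vdm_prod /pair_sum_prod invfM mulrCA; congr (_ * _).
rewrite -prodfV -big_split /=; apply: eq_bigr => i _.
by rewrite -prodfV -big_split.
Qed.

Lemma pair_sum_prod_gt0 m (d : 'I_m -> R) : (forall i, 0 < d i) -> 0 < pair_sum_prod d.
Proof.
by move=> d_gt0; do 2!apply: prodr_gt0 => ? _; rewrite addr_gt0.
Qed.

Section Positive.
Variables (n : nat) (e : 'I_n.+1 -> R).
Hypothesis e_gt0 : forall i, 0 < e i.

Lemma det_integral_value_lift i :
  det_integral_value (fun k => e (lift i k)) =
  vdm_prod (fun k => e (lift i k)) * \prod_(a < n.+1) (e i + e a) /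
    (2 * ((\prod_a e a) * pair_sum_prod e)).
Proof.
have prod_e : \prod_a e a = e i * \prod_(k < n) e (lift i k) by rewrite (bigD1_ord i).
have prod_ei : \prod_a (e i + e a) = (e i + e i) * \prod_(k < n) (e i + e (lift i k)).
  by rewrite (bigD1_ord i).
have pair_e : pair_sum_prod e =
    pair_sum_prod (fun k => e (lift i k)) * \prod_(k < n) (e i + e (lift i k)).
  rewrite /pair_sum_prod (prod_pairs_lift i); congr (_ * _); apply: eq_bigr => k _.
  by case: ifP => // _; rewrite addrC.
have pei_gt0 : 0 < \prod_(k < n) (e i + e (lift i k)).
  by apply: prodr_gt0 => k _; rewrite addr_gt0.
have pe_gt0 : 0 < \prod_(k < n) e (lift i k) by apply: prodr_gt0.
have pair_gt0 := @pair_sum_prod_gt0 _ (fun k => e (lift i k)) (fun k => e_gt0 _).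
rewrite det_integral_valueE prod_e prod_ei pair_e; field.
by rewrite !gt_eqF.
Qed.

Lemma det_integral_value_rec :
  det_integral_value e = (\sum_i e i)^-1 *
    \sum_(i < n.+1) (-1) ^+ (i + n) * det_integral_value (fun k => e (lift i k)).
Proof.
have sum_gt0 : 0 < \sum_i e i.
  rewrite big_ord_recl; apply: (lt_le_trans (e_gt0 ord0)); rewrite lerDl.
  by apply: sumr_ge0 => k _; exact: ltW.
have prod_gt0 : 0 < \prod_i e i by apply: prodr_gt0.
have pair_gt0 := pair_sum_prod_gt0 e_gt0.
rewrite det_integral_valueE.
transitivity ((\sum_i e i)^-1 * ((plus_minus_poly e)`_n * vdm_prod e /
                                  (2 * ((\prod_i e i) * pair_sum_prod e)))).
  by rewrite coef_plus_minus_poly; field; rewrite !gt_eqF.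
rewrite -vdm_prod_expand ?size_plus_minus_poly // mulr_suml; congr (_ * _).
apply: eq_bigr => i _; rewrite horner_plus_minus_poly det_integral_value_lift addnC.
by ring.
Qed.

End Positive.
End DetIntegralValue.

Section MonomialExpansion.
Variables (R : realFieldType) (pw : R -> R -> R).

(* A list [F] of pairs [(c, a)] stands for the sum of the monomials
   [c * \prod_j pw x_j a_j]; [pw x a] will be [x `^ (a - 1)]. *)
Definition monom n (a x : seq R) : R := \prod_(j < n) pw (nth 0 x j) (nth 0 a j).

Definition eval_monoms n (F : seq (R * seq R)) x := \sum_(p <- F) p.1 * monom n p.2 x.

(* [inv_psums_prod 0 a] is the integral of [\prod_j x_j^(a_j - 1)] over [J_n]. *)
Fixpoint inv_psums_prod (s : R) (a : seq R) : R :=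
  if a is b :: a' then (s + b)^-1 * inv_psums_prod (s + b) a' else 1.

Definition monoms_value (F : seq (R * seq R)) := \sum_(p <- F) p.1 * inv_psums_prod 0 p.2.

Definition monoms_of_weight n S (F : seq (R * seq R)) := forall p, p \in F ->
  [/\ size p.2 = n, all (fun b => 0 < b) p.2 & \sum_(b <- p.2) b = S].

Definition pw_mx n (e : 'I_n -> R) (x : seq R) : 'M[R]_n :=
  \matrix_(i < n, j < n) pw (nth 0 x j) (e i).

Lemma inv_psums_prod_rcons s a b :
  inv_psums_prod s (rcons a b) = inv_psums_prod s a * (s + \sum_(c <- a) c + b)^-1.
Proof.
elim: a s => [|c a IH] s /=; first by rewrite big_nil addr0 mul1r mulr1.
by rewrite IH big_cons addrA mulrA.
Qed.

Lemma monom_rcons n a b x : size a = n ->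
  monom n.+1 (rcons a b) x = monom n a x * pw (nth 0 x n) b.
Proof.
move=> size_a; rewrite /monom big_ord_recr /= nth_rcons size_a ltnn eqxx.
by congr (_ * _); apply: eq_bigr => j _; rewrite nth_rcons size_a ltn_ord.
Qed.

(* Expansion along the last column, mirroring [det_integral_value_rec]. *)
Lemma det_pw_mx_monoms n (e : 'I_n -> R) : (forall i, 0 < e i) ->
  exists F, [/\ monoms_of_weight n (\sum_i e i) F,
     forall x, eval_monoms n F x = \det (pw_mx e x) &
     monoms_value F = det_integral_value e].
Proof.
elim: n e => [|n IH] e e_gt0.
  exists [:: (1, [::])]; split.
  - by move=> p; rewrite inE => /eqP -> /=; rewrite big_nil big_ord0.
  - by move=> x; rewrite /eval_monoms big_seq1 /monom big_ord0 mulr1 det_mx00.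
  - by rewrite /monoms_value big_seq1 /= mulr1 /det_integral_value !big_ord0 invr1 mulr1.
have /fin_all_exists [Fs Fs_spec] (i : 'I_n.+1) := IH (fun k => e (lift i k)) (fun k => e_gt0 _).
pose F := flatten [seq [seq ((-1) ^+ (i + n) * p.1, rcons p.2 (e i)) | p <- Fs i]
                  | i : 'I_n.+1 <- enum 'I_n.+1].
have sum_lift (i : 'I_n.+1) : \sum_(k < n) e (lift i k) + e i = \sum_i e i.
  by rewrite (bigD1_ord i) //= addrC.
exists F; split.
- move=> p /flattenP [s /mapP [i _ ->] /mapP [q qF ->]] /=.
  have [/(_ q qF) [size_q pos_q sum_q] _ _] := Fs_spec i.
  split; first by rewrite size_rcons size_q.
    by rewrite all_rcons e_gt0 pos_q.
  by rewrite -cats1 big_cat big_seq1 /= sum_q sum_lift.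
- move=> x; rewrite /eval_monoms big_flatten /= big_map big_enum /=.
  rewrite (expand_det_col _ ord_max); apply: eq_bigr => i _.
  have [weight_Fi eval_Fi _] := Fs_spec i.
  rewrite /cofactor.
  have -> : row' i (col' ord_max (pw_mx e x)) = pw_mx (fun k => e (lift i k)) x.
    by apply/matrixP => k l; rewrite !mxE lift_max.
  rewrite -eval_Fi big_map /eval_monoms !big_distrr /=; apply: eq_big_seq => q qF.
  have [size_q _ _] := weight_Fi q qF.
  by rewrite monom_rcons // !mxE /=; ring.
- rewrite /monoms_value big_flatten /= big_map big_enum /= (det_integral_value_rec e_gt0).
  rewrite big_distrr /=; apply: eq_bigr => i _.
  have [weight_Fi _ <-] := Fs_spec i.
  rewrite big_map /monoms_value !big_distrr /=; apply: eq_big_seq => q qF.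
  have [_ _ sum_q] := weight_Fi q qF.
  by rewrite inv_psums_prod_rcons /= add0r sum_q sum_lift; ring.
Qed.

End MonomialExpansion.

Local Open Scope classical_set_scope.

Section PowerIntegral.
Variable R : realType.
Local Notation mu := (@lebesgue_measure R).

Lemma measurable_fun_powR (g : R) (D : set R) : measurable_fun D (fun x : R => x `^ g).
Proof. exact: measurable_funS (measurable_powR g). Qed.

Lemma integral_itv_powR_gt0 (g c : R) : 0 < g -> 0 < c -> c <= 1 ->
  (\int[mu]_(x in `[c, 1%R]) (x `^ (g - 1))%:E = ((1 - c `^ g) / g)%:E)%E.
Proof.
move=> g_gt0 c_gt0; rewrite le_eqVlt => /orP[/eqP ->|c_lt1].
  by rewrite set_itv1 integral_set1 powR1 subrr mul0r.
have der_powR x : c <= x -> derivable (fun y : R => y `^ g / g) x 1.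
  move=> cx; apply: derivableM => //.
  by apply: derivable_powR; rewrite in_itv /= andbT (lt_le_trans c_gt0).
have cont : {within `[c, 1], continuous (fun x : R => x `^ g / g)}.
  by apply: derivable_within_continuous => x; rewrite in_itv /= => /andP[/der_powR].
rewrite (@continuous_FTC2 _ _ (fun x => x `^ g / g)) //.
- by rewrite powR1 -EFinB mulrBl mul1r.
- apply: derivable_within_continuous => x; rewrite in_itv /= => /andP[cx _].
  by apply: derivable_powR; rewrite in_itv /= andbT (lt_le_trans c_gt0).
- have [_ cont_c cont_1] := (continuous_within_itvP _ c_lt1).1 cont.
  by split => // x; rewrite in_itv /= => /andP[/ltW/der_powR].
- move=> x; rewrite in_itv /= => /andP[cx _].
  have x_gt0 : 0 < x by rewrite (lt_trans c_gt0).
  rewrite derive1E.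
  have := is_deriveM (is_derive1_powR g x_gt0) (is_derive_cst (g^-1) x 1).
  rewrite [X in 'D_1 X x](_ : _ = ((@powR R)^~ g * cst g^-1)) // => der.
  by rewrite derive_val /= scaler0 add0r /GRing.scale /=; field; rewrite gt_eqF.
Qed.

(* The singularity at [0] is reached by monotone convergence over [`[1/(k+1), 1]]. *)
Lemma integral_itv_powR (g c : R) : 0 < g -> 0 <= c -> c <= 1 ->
  (\int[mu]_(x in `[c, 1%R]) (x `^ (g - 1))%:E = ((1 - c `^ g) / g)%:E)%E.
Proof.
move=> g_gt0; rewrite le_eqVlt => /orP[/eqP <- _|]; last exact: integral_itv_powR_gt0.
have mf D : measurable_fun D (fun x : R => (x `^ (g - 1))%:E).
  by apply/measurable_EFinP; exact: measurable_fun_powR.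
rewrite -integral_itv_obnd_cbnd //.
pose F k := `[(k.+1%:R)^-1 : R, 1%R]%classic.
have UF : \bigcup_k F k = `]0%R, 1%R]%classic.
  apply/seteqP; split => x /=.
    move=> [k _]; rewrite /F /= !in_itv /= => /andP[kx ->]; rewrite andbT.
    by apply: lt_le_trans kx; rewrite invr_gt0.
  rewrite in_itv /= => /andP[x_gt0 x_le1].
  exists (Num.truncn x^-1) => //; rewrite /F /= in_itv /= x_le1 andbT.
  rewrite -[X in _ <= X](invrK x) lef_pV2 ?posrE ?invr_gt0 //.
  by rewrite ltW // real_truncnS_gt // num_real.
have F_nd : nondecreasing_seq F.
  apply/nondecreasing_seqP => k; rewrite subsetEset /F => x /=.
  rewrite !in_itv /= => /andP[kx ->]; rewrite andbT; apply: le_trans kx.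
  by rewrite lef_pV2 ?posrE // ler_nat.
have cvg_F : ((\int[mu]_(x in F k) (x `^ (g - 1))%:E) @[k --> \oo] -->
    \int[mu]_(x in `]0%R, 1%R]) (x `^ (g - 1))%:E)%E.
  rewrite -UF; apply: ge0_nondecreasing_set_cvg_integral => //.
  - by move=> k; exact: measurable_itv.
  - by move=> k; exact: mf.
  - by move=> k x _; rewrite lee_fin powR_ge0.
have cvg_F' : ((\int[mu]_(x in F k) (x `^ (g - 1))%:E) @[k --> \oo] -->
    ((1 - 0 `^ g) / g)%:E)%E.
  have harmonic_pow : (fun k : nat => (harmonic k) `^ g) @ \oo --> (0 : R).
    apply: ((cvg_at_rightP (fun a : R => a `^ g) 0 0).1 (powR_cvg0 g_gt0) harmonic).
    by split; [move=> k; exact: harmonic_gt0 | exact: cvg_harmonic].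
  rewrite powR0 ?gt_eqF //.
  under eq_fun => k do
    rewrite /F integral_itv_powR_gt0 ?invr_gt0 ?ltr0n ?invf_le1 ?ler1n //.
  apply: cvg_EFin; first by near=> k.
  by apply: cvgM; [apply: cvgB; [exact: cvg_cst | exact: harmonic_pow] | exact: cvg_cst].
by rewrite -(cvg_lim _ cvg_F) // (cvg_lim _ cvg_F').
Unshelve. all: by end_near.
Qed.

End PowerIntegral.

Section SumIntegral.
Variable R : realType.
Local Notation mu := (@lebesgue_measure R).

Lemma integrable_sum_mem (I : eqType) (s : seq I) (f : I -> R -> \bar R) :
  (forall i, i \in s -> mu.-integrable setT (f i)) ->
  mu.-integrable setT (fun x => (\sum_(i <- s) f i x)%E).
Proof. by move=> int_f; under eq_fun do rewrite big_seq; exact: integrable_sum. Qed.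

Lemma integral_sum_mem (I : eqType) (s : seq I) (f : I -> R -> \bar R) :
  (forall i, i \in s -> mu.-integrable setT (f i)) ->
  (\int[mu]_x (\sum_(i <- s) f i x) = \sum_(i <- s) \int[mu]_x f i x)%E.
Proof.
elim: s => [|a s IH] int_f.
  by under eq_integral do rewrite big_nil; rewrite integral0 big_nil.
have int_s i : i \in s -> mu.-integrable setT (f i).
  by move=> si; apply: int_f; rewrite inE si orbT.
under eq_integral do rewrite big_cons.
rewrite integralD ?big_cons ?IH //; first exact/int_f/mem_head.
exact: integrable_sum_mem.
Qed.

End SumIntegral.

Section CutPower.
Variable R : realType.
Local Notation mu := (@lebesgue_measure R).

Definition cut_powR (c b t x : R) : \bar R :=
  (((c <= x <= 1)%R)%:R * (x `^ (b - 1) * x `^ t))%:E.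

Lemma cut_powRE c b t :
  cut_powR c b t = (fun x => (x `^ (b - 1) * x `^ t)%:E) \_ `[c, 1%R].
Proof.
apply/funext => x; rewrite /cut_powR /patch /= mem_setE in_itv /=.
by case: ifP => _; rewrite ?mul1r ?mul0r.
Qed.

Lemma measurable_cut_powR c b t : measurable_fun setT (cut_powR c b t).
Proof.
rewrite cut_powRE; apply/(measurable_restrictT _ _).1; first exact: measurable_itv.
by apply/measurable_EFinP; apply: measurable_funM; exact: measurable_fun_powR.
Qed.

Section Integral.
Variables (c b t : R).
Hypotheses (b_gt0 : 0 < b) (t_ge0 : 0 <= t) (c_ge0 : 0 <= c) (c_le1 : c <= 1).

Lemma integral_cut_powR :
  (\int[mu]_x cut_powR c b t x = ((1 - c `^ (b + t)) / (b + t))%:E)%E.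
Proof.
have bt_gt0 : 0 < b + t by rewrite (lt_le_trans b_gt0) ?lerDl.
rewrite cut_powRE -integral_mkcond -integral_itv_powR //.
apply: eq_integral_itv_bounded.
- by apply: measurable_funM; exact: measurable_fun_powR.
- exact: measurable_fun_powR.
- move=> x; rewrite in_itv /= => /andP[cx _].
  have x_neq0 : x != 0 by rewrite gt_eqF // (le_lt_trans c_ge0).
  by rewrite -powRD ?x_neq0 ?implybT // addrAC.
Qed.

Lemma integrable_cut_powR : mu.-integrable setT (cut_powR c b t).
Proof.
apply/integrableP; split; first exact: measurable_cut_powR.
under eq_integral do rewrite gee0_abs ?lee_fin ?mulr_ge0 ?powR_ge0 //.
by rewrite integral_cut_powR ltry.
Qed.

End Integral.
End CutPower.

Section GeneralizedPolynomials.
Variable R : realType.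
Local Notation mu := (@lebesgue_measure R).

Definition gpoly_eval (G : seq (R * R)) (c : R) := \sum_(q <- G) q.1 * c `^ q.2.

(* The function [c |-> \int_c^1 x^(b-1) G(x) dx]. *)
Definition gpoly_tail (b : R) (G : seq (R * R)) : seq (R * R) :=
  (\sum_(q <- G) q.1 / (b + q.2), 0) :: [seq (- (q.1 / (b + q.2)), b + q.2) | q <- G].

(* The integral of [\prod_j x_j^(a_j - 1)] over [c <= x_1 <= ... <= x_m <= 1]. *)
Fixpoint chain_gpoly (a : seq R) : seq (R * R) :=
  if a is b :: a' then gpoly_tail b (chain_gpoly a') else [:: (1, 0)].

(* [\int_0^1 x^(b-1) G(x) dx], when the exponents in [G] are nonnegative. *)
Definition gpoly_moment (G : seq (R * R)) (b : R) := \sum_(q <- G) q.1 / (b + q.2).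

Definition tail_fun (c b : R) (G : seq (R * R)) (x : R) : \bar R :=
  (((c <= x <= 1)%R)%:R * (x `^ (b - 1) * gpoly_eval G x))%:E.

Lemma gpoly_eval_tail b G c :
  gpoly_eval (gpoly_tail b G) c = \sum_(q <- G) q.1 * ((1 - c `^ (b + q.2)) / (b + q.2)).
Proof.
rewrite /gpoly_eval big_cons big_map /= powRr0 mulr1.
by rewrite -big_split /=; apply: eq_bigr => q _; ring.
Qed.

Lemma chain_gpoly_exp_ge0 a : all (fun b => 0 < b) a ->
  forall q, q \in chain_gpoly a -> 0 <= q.2.
Proof.
elim: a => [_ q|b a IH /= /andP[b_gt0 a_gt0] q]; first by rewrite inE => /eqP ->.
rewrite inE => /orP[/eqP -> //|/mapP [q' q'_in ->] /=].
by apply: addr_ge0; [exact: ltW | exact: IH].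
Qed.

Lemma gpoly_moment_chain a : all (fun b => 0 < b) a ->
  forall b, 0 < b -> gpoly_moment (chain_gpoly a) b = b^-1 * inv_psums_prod b a.
Proof.
elim: a => [_ b b_gt0|b' a IH /= /andP[b'_gt0 a_gt0] b b_gt0].
  by rewrite /gpoly_moment big_seq1 /= addr0 mul1r mulr1.
rewrite /gpoly_moment big_cons big_map /= addr0 -IH ?addr_gt0 //.
rewrite /gpoly_moment mulr_suml mulr_sumr -big_split /=; apply: eq_big_seq => q q_in.
have := chain_gpoly_exp_ge0 a_gt0 q_in => q_ge0.
by field; rewrite !gt_eqF //; lra.
Qed.

Lemma gpoly_eval_chain0 a : all (fun b => 0 < b) a ->
  gpoly_eval (chain_gpoly a) 0 = inv_psums_prod 0 a.
Proof.
case: a => [_|b a /= /andP[b_gt0 a_gt0]].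
  by rewrite /gpoly_eval big_seq1 /= powRr0 mulr1.
rewrite /gpoly_eval big_cons big_map /= powRr0 mulr1 [X in _ + X]big1_seq ?addr0.
  by rewrite add0r; exact: gpoly_moment_chain.
move=> q /andP[_ q_in] /=; rewrite powR0 ?mulr0 // gt_eqF //.
by rewrite (lt_le_trans b_gt0) ?lerDl ?(chain_gpoly_exp_ge0 a_gt0).
Qed.

Section TailIntegral.
Variables (c b : R) (G : seq (R * R)).
Hypotheses (b_gt0 : 0 < b) (G_ge0 : forall q, q \in G -> 0 <= q.2).
Hypotheses (c_ge0 : 0 <= c) (c_le1 : c <= 1).

Lemma tail_funE : tail_fun c b G = fun x => (\sum_(q <- G) q.1%:E * cut_powR c b q.2 x)%E.
Proof.
apply/funext => x; rewrite /tail_fun /gpoly_eval /cut_powR.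
under [RHS]eq_bigr do rewrite -EFinM.
rewrite sumEFin; congr EFin.
by rewrite !mulr_sumr; apply: eq_bigr => q _; ring.
Qed.

Lemma integrable_tail_fun : mu.-integrable setT (tail_fun c b G).
Proof.
rewrite tail_funE; apply: integrable_sum_mem => q q_in.
by apply: integrableZl => //; apply: integrable_cut_powR => //; exact: G_ge0.
Qed.

Lemma integral_tail_fun :
  (\int[mu]_x tail_fun c b G x = (gpoly_eval (gpoly_tail b G) c)%:E)%E.
Proof.
rewrite tail_funE integral_sum_mem => [|q q_in]; last first.
  by apply: integrableZl => //; apply: integrable_cut_powR => //; exact: G_ge0.
rewrite gpoly_eval_tail -sumEFin; apply: eq_big_seq => q q_in.
by rewrite integralZl ?integral_cut_powR ?G_ge0 ?integrable_cut_powR ?G_ge0.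
Qed.

End TailIntegral.
End GeneralizedPolynomials.

Section OrderedIntegral.
Variable R : realType.
Local Notation mu := (@lebesgue_measure R).

Definition pow_m1 (x a : R) := x `^ (a - 1).

Definition ordered_from (c : R) (t : seq R) := path <=%R c t && (last c t <= 1).

Lemma ordered_from_le1 c t : ordered_from c t -> c <= 1.
Proof.
case/andP => ct last_le1; apply: le_trans last_le1.
have := order_path_min le_trans ct; case/lastP: t {ct} => [_|t y] /=; first exact: lexx.
by rewrite last_rcons all_rcons => /andP[].
Qed.

Lemma ordered_from_cons c x t :
  ordered_from c (x :: t) = (c <= x <= 1) && ordered_from x t.
Proof.
rewrite /ordered_from /= -!andbA; case: (c <= x) => //=.
apply/idP/idP => [xt|/andP[_ //]].
by rewrite (ordered_from_le1 xt).
Qed.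

Lemma iint0 m : iint (fun _ : m.-tuple R => 0%E) = 0%E.
Proof. by elim: m => [|m IH] //=; under eq_integral do rewrite IH; exact: integral0. Qed.

Lemma eval_monoms_cons m F x t :
  eval_monoms pow_m1 m.+1 F (x :: t) =
  eval_monoms pow_m1 m [seq (p.1 * pow_m1 x (head 0 p.2), behead p.2) | p <- F] t.
Proof.
rewrite /eval_monoms big_map; apply: eq_bigr => p _.
rewrite /monom big_ord_recl /= nth0 mulrA; congr (_ * _).
by apply: eq_bigr => j _; rewrite /= nth_behead.
Qed.

Definition monoms_of_size m (F : seq (R * seq R)) :=
  forall p, p \in F -> size p.2 = m /\ all (fun b => 0 < b) p.2.

Lemma monoms_of_size_cons m F p : monoms_of_size m.+1 F -> p \in F ->
  [/\ p.2 = head 0 p.2 :: behead p.2, 0 < head 0 p.2 & all (fun b => 0 < b) (behead p.2)].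
Proof. by move=> F_size /F_size[]; case: (p.2) => //= b a _ /andP[]. Qed.

Lemma monoms_of_size_behead m F (k : R * seq R -> R) : monoms_of_size m.+1 F ->
  monoms_of_size m [seq (k p, behead p.2) | p <- F].
Proof.
move=> F_size _ /mapP[p pF ->] /=; have [p2 _ pos] := monoms_of_size_cons F_size pF.
by have [+ _] := F_size p pF; rewrite p2 /= => -[<-]; rewrite size_behead.
Qed.

Lemma iint_ordered_monoms m c F : 0 <= c -> c <= 1 -> monoms_of_size m F ->
  iint (fun t : m.-tuple R => ((ordered_from c t)%:R * eval_monoms pow_m1 m F t)%:E) =
  (\sum_(p <- F) p.1 * gpoly_eval (chain_gpoly p.2) c)%:E.
Proof.
elim: m c F => [|m IH] c F c_ge0 c_le1 F_size.
  rewrite /= /ordered_from /= c_le1 mul1r; congr EFin; apply: eq_big_seq => p pF.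
  have [] := F_size p pF; case: p pF => w [|//] _ _ _ /=.
  by rewrite /monom big_ord0 /gpoly_eval big_seq1 /= powRr0 !mulr1.
pose tail (p : R * seq R) := tail_fun c (head 0 p.2) (chain_gpoly (behead p.2)).
have inner x : iint (fun t : m.-tuple R =>
      ((ordered_from c [tuple of x :: t])%:R *
       eval_monoms pow_m1 m.+1 F [tuple of x :: t])%:E) =
    (\sum_(p <- F) p.1%:E * tail p x)%E.
  rewrite /tail /tail_fun; under [RHS]eq_bigr do rewrite -EFinM.
  rewrite sumEFin /=; under eq_fun do rewrite ordered_from_cons eval_monoms_cons.
  case: (boolP (c <= x <= 1)) => [/andP[cx x_le1]|_]; last first.
    under eq_fun do rewrite mul0r; rewrite iint0.
    by congr EFin; rewrite big1 // => p _; rewrite mul0r mulr0.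
  rewrite (IH x) ?(le_trans c_ge0 cx) //; last exact: monoms_of_size_behead F_size.
  congr EFin; rewrite big_map; apply: eq_bigr => p _.
  by rewrite mul1r /pow_m1 /= mulrA.
cbn [iint]; under eq_integral do rewrite inner.
have tail_ok p : p \in F -> mu.-integrable setT (tail p) /\
    (\int[mu]_x tail p x = (gpoly_eval (chain_gpoly p.2) c)%:E)%E.
  move=> pF; have [p2 hd_gt0 pos] := monoms_of_size_cons F_size pF.
  have G_ge0 := chain_gpoly_exp_ge0 pos.
  by rewrite [in RHS]p2; split; [exact: integrable_tail_fun | exact: integral_tail_fun].
rewrite integral_sum_mem => [|p /tail_ok[int_p _]]; last exact: integrableZl.
rewrite -sumEFin; apply: eq_big_seq => p /tail_ok[int_p int_tail].
by rewrite integralZl // int_tail -EFinM.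
Qed.

End OrderedIntegral.

Lemma Jn_ordered_from (R : realType) n (x : n.-tuple R) : Jn x <-> ordered_from 0 x.
Proof.
have size_x : size x = n := size_tuple x.
split.
- move=> [x01 x_mono]; apply/andP; split.
  + apply/(pathP 0) => i; rewrite size_x => i_lt.
    case: i i_lt => [|i] i_lt /=; first by have [] := x01 (Ordinal i_lt); rewrite (tnth_nth 0).
    have := x_mono (Ordinal (ltnW i_lt)) (Ordinal i_lt) (leqnSn i).
    by rewrite !(tnth_nth 0).
  + rewrite (last_nth 0) size_x; case: n x size_x x01 {x_mono} => // n x _ x01.
    by have [] := x01 ord_max; rewrite (tnth_nth 0).
- case/andP => x_sorted last_le1.
  have x_mono i j : (i <= j)%N -> (j <= n)%N -> nth 0 (0 :: x) i <= nth 0 (0 :: x) j.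
    move=> ij jn; apply: (sorted_leq_nth le_trans lexx) => //;
      by rewrite inE /= size_x ltnS // (leq_trans ij jn).
  have x_le1 : nth 0 (0 :: x) n <= 1 by move: last_le1; rewrite (last_nth 0) size_x.
  split => [i|i j ij]; rewrite !(tnth_nth 0).
    by rewrite (x_mono 0 i.+1) //= (le_trans _ x_le1) // (x_mono i.+1 n).
  exact: (x_mono i.+1 j.+1).
Qed.

Lemma indic_Jn (R : realType) n (x : n.-tuple R) :
  \1_(@Jn R n) x = (ordered_from 0 x)%:R :> R.
Proof.
rewrite indicE (_ : (x \in @Jn R n) = ordered_from 0 x) //.
have [xJ|xJ] := boolP (ordered_from 0 x); first by apply: mem_set; apply/Jn_ordered_from.
by apply/negbTE/negP => /set_mem/Jn_ordered_from; rewrite (negbTE xJ).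
Qed.

Theorem proposition2p2p2 (R : realType) (n : nat) (e : 'I_n -> R)
    (he : forall i, 0 < e i) :
  iint (fun x : n.-tuple R => ((\1_(@Jn R n) x) * powdet e x)%:E) =
  ((\prod_(i < n) e i)^-1 *
   \prod_(i < n) \prod_(j < n | (i < j)%N) ((e j - e i) / (e j + e i)))%:E.
Proof.
have [F [F_weight F_det F_value]] := det_pw_mx_monoms (@pow_m1 R) he.
have F_pos p : p \in F -> all (fun b => 0 < b) p.2 by case/F_weight.
have F_size : monoms_of_size n F by move=> p /F_weight[].
transitivity (iint (fun x : n.-tuple R =>
    ((ordered_from 0 x)%:R * eval_monoms (@pow_m1 R) n F x)%:E)).
  congr iint; apply/funext => x; rewrite indic_Jn F_det /powdet.
  by congr (EFin (_ * \det _)); apply/matrixP => i j; rewrite !mxE (tnth_nth 0).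
rewrite iint_ordered_monoms //; congr EFin.
rewrite -[RHS]/(det_integral_value e) -F_value; apply: eq_big_seq => p /F_pos p_pos.
by rewrite gpoly_eval_chain0.
Qed.
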